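(* Let $C=(1,c_2,c_3,c_4,c_5,c_6)=(1,c_2,2c_2,c_4,c_2+c_4,2c_4)$ be a system with $c_4\ge 3c_2-1$ and $c_4\ne 3c_2$, and let $\ell=\lceil c_5/c_3\rceil$. Suppose $\mathrm{grd}_C(\ell c_3)=\ell c_3-c_5+1-\lfloor(\ell c_3-c_5)/c_2\rfloor(c_2-1)$ and $\mathrm{grd}_C(\ell c_3)\le\ell$. Then $C$ is canonical and the subsystem $(1,c_2,2c_2,c_4,c_2+c_4)$ is noncanonical.
   Context: A system is a tuple $C=(c_1,\dots,c_n)$ of integers with $1=c_1<c_2<\dots<c_n$; for $k\le n$, $(c_1,\dots,c_k)$ is a subsystem. For a positive integer $v$, $\mathrm{opt}_C(v)$ is the minimum of $\sum_i x_i$ over $x\in\mathbb{Z}_{\ge0}^n$ with $\sum_i c_ix_i=v$. The greedy representation of $v$ is produced by: for $i=n$ down to $1$, while $c_i\le$ remaining value, take a coin $c_i$. $\mathrm{grd}_C(v)$ is its number of coins. A positive integer $w$ is a counterexample if $\mathrm{opt}_C(w)<\mathrm{grd}_C(w)$; $C$ is canonical if it has none, noncanonical otherwise. *)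

From mathcomp Require Import all_boot.
Set Implicit Arguments. Unset Strict Implicit. Unset Printing Implicit Defensive.

Definition is_system (C : seq nat) : Prop :=
  0 < size C /\ nth 0 C 0 = 1 /\ sorted (fun a b => a < b) C.

Definition is_rep (C : seq nat) (v : nat) (x : seq nat) : Prop :=
  size x = size C /\ \sum_(i < size C) nth 0 C i * nth 0 x i = v.

Definition is_opt (C : seq nat) (v k : nat) : Prop :=
  (exists x, is_rep C v x /\ sumn x = k) /\
  (forall x, is_rep C v x -> k <= sumn x).

(* Greedy on coins listed in decreasing order: while c <= remaining, take c;
   i.e. take (v %/ c) coins c, leaving v %% c. *)
Fixpoint grd_desc (s : seq nat) (v : nat) : nat :=
  match s with
  | [::] => 0
  | c :: s' => v %/ c + grd_desc s' (v %% c)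
  end.

Definition grd (C : seq nat) (v : nat) : nat := grd_desc (rev C) v.

Definition counterexample (C : seq nat) (w : nat) : Prop :=
  0 < w /\ exists k, is_opt C w k /\ k < grd C w.

Definition canonical (C : seq nat) : Prop := forall w, ~ counterexample C w.
Definition noncanonical (C : seq nat) : Prop := exists w, counterexample C w.

(* Greedy is optimal as soon as adding any coin raises the greedy count by at
   most one, since greedy is then bounded along every representation.  For
   C = (1, a, 2a, b, a + b, 2b), reducing modulo 2b and splitting [0, 2b) at b
   and a + b reduces this to a few cases about the greedy count g of
   (1, a, 2a), which is itself of this kind and therefore subadditive.  The only
   case needing more is  y + 2a - b <= g y  for  b - 2a <= y < b - a; it follows
   from grd C (l (2a)) <= l by subadditivity of g at y + (l (2a) - (a + b)).
   Without the coin 2b, greedy pays at least three coins for 2b = b + b. *)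

From mathcomp Require Import all_boot zify.

Set Implicit Arguments.
Unset Strict Implicit.
Unset Printing Implicit Defensive.

Lemma grd_rcons C c w : grd (rcons C c) w = w %/ c + grd C (w %% c).
Proof. by rewrite /grd rev_rcons. Qed.

Lemma grd_rcons_euclid C c q r :
  r < c -> grd (rcons C c) (q * c + r) = q + grd C r.
Proof.
move=> r_lt; have c_gt0 : 0 < c by lia.
by rewrite grd_rcons divnMDl // modnMDl divn_small // modn_small ?addn0.
Qed.

Lemma grd_rcons_small C c r : r < c -> grd (rcons C c) r = grd C r.
Proof. by move=> r_lt; rewrite -[r]add0n -(mul0n c) grd_rcons_euclid. Qed.

Lemma grd_rcons_shift C c k w :
  0 < c -> grd (rcons C c) (k * c + w) = k + grd (rcons C c) w.
Proof.
move=> c_gt0; rewrite !grd_rcons divnMDl // modnMDl; lia.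
Qed.

Lemma grd0 C : grd C 0 = 0.
Proof. by rewrite /grd; elim: (rev C) => //= c s; rewrite div0n mod0n => ->. Qed.

Lemma grd1 w : grd [:: 1] w = w.
Proof. by rewrite /grd /= divn1 addn0. Qed.

Definition coin_lipschitz (f : nat -> nat) (C : seq nat) :=
  forall w c, c \in C -> f (w + c) <= (f w).+1.

Lemma add_mul_coin_le f c :
  (forall w, f (w + c) <= (f w).+1) -> forall w k, f (w + k * c) <= f w + k.
Proof.
move=> fc w; elim=> [|k IHk]; first by rewrite mul0n !addn0.
by rewrite mulSnr addnA (leq_trans (fc _)) // addnS ltnS.
Qed.

Lemma coin_lipschitz_add_grd f C :
  coin_lipschitz f (1 :: C) -> forall w v, f (w + v) <= f w + grd (1 :: C) v.
Proof.
elim/last_ind: C => [|C c IHC] fL w v.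
  by rewrite grd1 -{1}[v]muln1; apply: add_mul_coin_le => u; apply: fL; rewrite inE.
have fLC : coin_lipschitz f (1 :: C).
  by move=> u d dC; apply: fL; rewrite -rcons_cons mem_rcons inE dC orbT.
have fc u : f (u + c) <= (f u).+1 by apply: fL; rewrite -rcons_cons mem_rcons inE eqxx.
rewrite -rcons_cons grd_rcons {1}(divn_eq v c) [_ * c + _]addnC addnA.
have := IHC fLC w (v %% c); have := add_mul_coin_le fc (w + v %% c) (v %/ c); lia.
Qed.

Lemma sumn_nth s : sumn s = \sum_(i < size s) nth 0 s i.
Proof. by rewrite sumnE (big_nth 0) big_mkord. Qed.

Lemma canonical_of_coin_lipschitz C : coin_lipschitz (grd C) C -> canonical C.
Proof.
move=> gL w [_ [k [[[x [[sx <-] <-]] _]]]]; apply/negP; rewrite -leqNgt sumn_nth sx.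
elim: (size C) => [|n IHn]; first by rewrite !big_ord0 grd0.
rewrite !big_ord_recr /= (leq_trans _ (leq_add IHn (leqnn (nth 0 x n)))) //.
have [ltnC|lenC] := ltnP n (size C).
  by rewrite mulnC add_mul_coin_le // => u; apply: gL; rewrite mem_nth.
by rewrite nth_default // mul0n addn0 leq_addr.
Qed.

Lemma rep_value_le C v x m :
  is_rep C v x -> {in C, forall c, c <= m} -> v <= sumn x * m.
Proof.
move=> [sx <-] Cm; rewrite sumn_nth sx big_distrl leq_sum //= => i _.
by rewrite mulnC leq_mul2l Cm ?orbT // mem_nth.
Qed.

Lemma grd_gt0 C w : 1 \in C -> 0 < w -> 0 < grd C w.
Proof.
rewrite /grd -mem_rev; elim: (rev C) w => // c s IHs w.
rewrite inE => /orP[/eqP<- w_gt0|s1 w_gt0] /=; first by rewrite divn1 ltn_addr.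
have [q0|q_gt0] := posnP (w %/ c); last by rewrite ltn_addr.
rewrite q0 IHs //; move: w_gt0; rewrite {1}(divn_eq w c) q0; lia.
Qed.

Definition sys3 a := [:: 1; a; 2 * a].

Section Sys3.
Variable a : nat.
Hypothesis a_gt0 : 0 < a.
Local Notation grd3 := (grd (sys3 a)).

Let two_a_gt0 : 0 < 2 * a. Proof. by rewrite muln_gt0. Qed.

Lemma grd3_shift k y : grd3 (k * (2 * a) + y) = k + grd3 y.
Proof. by rewrite -[sys3 a]/(rcons [:: 1; a] (2 * a)) grd_rcons_shift. Qed.

Lemma grd3_add2a y : grd3 (y + 2 * a) = (grd3 y).+1.
Proof. by rewrite addnC -[2 * a]mul1n grd3_shift. Qed.

Lemma grd3_small z : z < a -> grd3 z = z.
Proof.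
move=> z_lt; rewrite -[sys3 a]/(rcons (rcons [:: 1] a) (2 * a)).
by rewrite !grd_rcons_small ?grd1 //; lia.
Qed.

Lemma grd3_mid t : t < a -> grd3 (a + t) = t.+1.
Proof.
move=> t_lt; rewrite -[sys3 a]/(rcons (rcons [:: 1] a) (2 * a)).
rewrite grd_rcons_small; last lia.
have -> : a + t = 1 * a + t by rewrite mul1n.
by rewrite grd_rcons_euclid // grd1.
Qed.

Lemma grd3_lt3 t : t < 3 * a ->
  grd3 t = if t < a then t else if t < 2 * a then (t - a).+1 else (t - 2 * a).+1.
Proof.
move=> t_lt; case: ltnP => [|a_le_t]; first exact: grd3_small.
case: ltnP => [t_lt_2a|le_2a_t].
  by rewrite -(subnK a_le_t) addnC grd3_mid; lia.
by rewrite -(subnK le_2a_t) grd3_add2a grd3_small; lia.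
Qed.

Lemma grd3_modD y c : grd3 (y + c) = y %/ (2 * a) + grd3 (y %% (2 * a) + c).
Proof. by rewrite {1}(divn_eq y (2 * a)) -addnA grd3_shift. Qed.

Lemma grd3_mod y : grd3 y = y %/ (2 * a) + grd3 (y %% (2 * a)).
Proof. by rewrite -[y in LHS]addn0 grd3_modD addn0. Qed.

Lemma grd3_add1 y : grd3 (y + 1) <= (grd3 y).+1.
Proof.
rewrite grd3_modD [grd3 y]grd3_mod -addnS leq_add2l.
have := ltn_pmod y two_a_gt0; set r := y %% _ => r_lt.
by rewrite !grd3_lt3; try lia; repeat case: ifP; lia.
Qed.

Lemma grd3_adda y : grd3 y <= grd3 (y + a) <= (grd3 y).+1.
Proof.
rewrite grd3_modD [grd3 y]grd3_mod -addnS leq_add2l leq_add2l.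
have := ltn_pmod y two_a_gt0; set r := y %% _ => r_lt.
by rewrite !grd3_lt3; try lia; repeat case: ifP; lia.
Qed.

Lemma coin_lipschitz_grd3 : coin_lipschitz grd3 (sys3 a).
Proof.
move=> w c; rewrite !inE => /or3P[] /eqP->.
- exact: grd3_add1.
- by case/andP: (grd3_adda w).
- by rewrite grd3_add2a.
Qed.

Lemma grd3_subadditive x y : grd3 (x + y) <= grd3 x + grd3 y.
Proof. exact: coin_lipschitz_add_grd coin_lipschitz_grd3 x y. Qed.

End Sys3.

Definition sys5 a b := [:: 1; a; 2 * a; b; a + b].
Definition sys6 a b := [:: 1; a; 2 * a; b; a + b; 2 * b].

(* With s = y + 2a: on [b, a + b), greedy for sys5 a b, which takes the coin b,
   uses no more coins than greedy for sys3 a. *)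
Definition greedy_gap a b :=
  forall y, b - 2 * a <= y -> y < b - a -> y + 2 * a - b <= grd (sys3 a) y.

Section Sys6.
Variables a b : nat.
Hypothesis a_gt1 : 1 < a.
Hypothesis b_ge : 3 * a - 1 <= b.
Local Notation grd3 := (grd (sys3 a)).
Local Notation grd5 := (grd (sys5 a b)).
Local Notation grd6 := (grd (sys6 a b)).

Let a_gt0 : 0 < a. Proof. lia. Qed.
Let two_a_gt0 : 0 < 2 * a. Proof. lia. Qed.

Lemma sys5E : sys5 a b = rcons (rcons (sys3 a) b) (a + b). Proof. by []. Qed.
Lemma sys6E : sys6 a b = rcons (sys5 a b) (2 * b). Proof. by []. Qed.

Lemma grd5_low s : s < b -> grd5 s = grd3 s.
Proof. by move=> s_lt; rewrite sys5E !grd_rcons_small //; lia. Qed.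

Lemma grd5_mid t : t < a -> grd5 (b + t) = t.+1.
Proof.
move=> t_lt; rewrite sys5E grd_rcons_small; last lia.
have -> : b + t = 1 * b + t by rewrite mul1n.
by rewrite grd_rcons_euclid ?grd3_small ?add1n //; lia.
Qed.

Lemma grd5_high y : y < b - a -> grd5 (a + b + y) = (grd3 y).+1.
Proof.
move=> y_lt; have -> : a + b + y = 1 * (a + b) + y by rewrite mul1n.
rewrite sys5E grd_rcons_euclid; last lia.
by rewrite grd_rcons_small //; lia.
Qed.

Lemma grd6_low s : s < 2 * b -> grd6 s = grd5 s.
Proof. by move=> s_lt; rewrite sys6E grd_rcons_small. Qed.

Lemma grd6_shift k w : grd6 (k * (2 * b) + w) = k + grd6 w.
Proof. by rewrite sys6E grd_rcons_shift //; lia. Qed.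

Lemma grd6_high t : t < 2 * b -> grd6 (2 * b + t) = (grd5 t).+1.
Proof.
move=> t_lt; have -> : 2 * b + t = 1 * (2 * b) + t by rewrite mul1n.
by rewrite sys6E grd_rcons_euclid.
Qed.

Variant region_spec : nat -> Prop :=
  | RegionLow s of s < b : region_spec s
  | RegionMid t of t < a : region_spec (b + t)
  | RegionHigh y of y < b - a : region_spec (a + b + y).

Lemma regionP s : s < 2 * b -> region_spec s.
Proof.
move=> s_lt; have [s_lt_b|b_le_s] := ltnP s b; first exact: RegionLow.
have [s_lt_ab|ab_le_s] := ltnP s (a + b).
  by rewrite -(subnKC b_le_s); apply: RegionMid; lia.
by rewrite -(subnKC ab_le_s); apply: RegionHigh; lia.
Qed.

Lemma greedy_gap_of_one_point :
  let l := (a + b + 2 * a - 1) %/ (2 * a) in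
  grd6 (l * (2 * a)) <= l -> greedy_gap a b.
Proof.
move=> l grd_l y y_ge y_lt; set L := l * (2 * a) in grd_l.
have L_rem : L + (a + b + 2 * a - 1) %% (2 * a) = a + b + 2 * a - 1.
  by rewrite /L /l -divn_eq.
have := ltn_pmod (a + b + 2 * a - 1) two_a_gt0 => rem_lt.
have l_gt1 : 1 < l by rewrite -(ltn_pmul2r two_a_gt0) mul1n -/L; lia.
have L_lt : L < 2 * b.
  have [l_le2|l_ge3] := leqP l 2.
    have : L <= 2 * (2 * a) by rewrite leq_mul2r l_le2 orbT.
    lia.
  have : 3 * (2 * a) <= L by rewrite leq_mul2r l_ge3 orbT.
  lia.
set r := L - (a + b).
rewrite (_ : L = a + b + r) ?grd6_low ?grd5_high in grd_l; try lia.
have : grd3 (y + r) = l.-1 + (y + 2 * a - b).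
  have -> : y + r = (l - 2) * (2 * a) + (a + (y + 2 * a - b)).
    by rewrite mulnBl -/L; lia.
  by rewrite grd3_shift // grd3_mid; lia.
have := grd3_subadditive a_gt0 y r; lia.
Qed.

Lemma noncanonical_sys5 : b <> 3 * a -> noncanonical (sys5 a b).
Proof.
move=> b_neq; exists (2 * b); split; first lia.
exists 2; split; first split.
- exists [:: 0; 0; 0; 2; 0]; split=> //; split=> //.
  by rewrite !big_ord_recr big_ord0 /=; lia.
- move=> x x_rep; have : {in sys5 a b, forall c, c <= a + b}.
    by move=> c; rewrite !inE => /orP[|/or4P[]] /eqP->; lia.
  move=> /(rep_value_le x_rep); case: (sumn x) => [|[|n]] //; lia.
- have -> : 2 * b = 1 * (a + b) + (b - a) by lia.
  rewrite sys5E grd_rcons_euclid ?grd_rcons_small; try lia.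
  have [ba_lt|ba_ge] := ltnP (b - a) (2 * a).
    by rewrite (_ : b - a = a + (a - 1)) ?grd3_mid; lia.
  have := grd_gt0 (C := sys3 a) (w := b - 3 * a) isT.
  by rewrite (_ : b - a = b - 3 * a + 2 * a) ?grd3_add2a; lia.
Qed.

Section Gap.
Hypothesis gap : greedy_gap a b.

Lemma greedy_gap_shift s : b - a <= s -> s < b -> s + a - b <= grd3 s.
Proof.
move=> s_ge s_lt; have /andP[mono _] := grd3_adda a_gt0 (s - a).
rewrite subnK in mono; last lia.
have := @gap (s - a); lia.
Qed.

Lemma grd6_add_coin_low s c : s < b -> c \in sys5 a b -> grd6 (s + c) <= (grd3 s).+1.
Proof.
move=> s_lt; rewrite !inE => /orP[|/or4P[]] /eqP->.
- have [s1_lt|s1_ge] := ltnP (s + 1) b.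
    by have add1 := grd3_add1 a_gt0 s; rewrite grd6_low ?grd5_low; lia.
  by rewrite (_ : s + 1 = b + 0) ?grd6_low ?grd5_mid; lia.
- have /andP[_ adda] := grd3_adda a_gt0 s; have gap_s := @greedy_gap_shift s.
  have [sa_lt|sa_ge] := ltnP (s + a) b; first by rewrite grd6_low ?grd5_low; lia.
  by rewrite (_ : s + a = b + (s + a - b)) ?grd6_low ?grd5_mid; lia.
- have gap_s2a := @gap s; have gap_s := @greedy_gap_shift s.
  have add2a := grd3_add2a a_gt0 s.
  have [s2a_lt|s2a_ge] := ltnP (s + 2 * a) b; first by rewrite grd6_low ?grd5_low; lia.
  have [s2a_lt'|s2a_ge'] := ltnP (s + 2 * a) (a + b).
    by rewrite (_ : s + 2 * a = b + (s + 2 * a - b)) ?grd6_low ?grd5_mid; lia.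
  by rewrite (_ : s + 2 * a = a + b + (s + a - b)) ?grd6_low ?grd5_high
             ?[grd3 (s + a - b)]grd3_small; lia.
- have [s_lt_a|s_ge_a] := ltnP s a.
    by rewrite addnC grd6_low ?grd5_mid ?grd3_small; lia.
  have /andP[mono _] := grd3_adda a_gt0 (s - a); rewrite subnK in mono; last lia.
  by rewrite (_ : s + b = a + b + (s - a)) ?grd6_low ?grd5_high; lia.
- have [s_lt'|s_ge'] := ltnP s (b - a).
    by rewrite (_ : s + (a + b) = a + b + s) ?grd6_low ?grd5_high; lia.
  have gap_s := @greedy_gap_shift s.
  by rewrite (_ : s + (a + b) = 2 * b + (s + a - b)) ?grd6_high ?grd5_low
             ?[grd3 (s + a - b)]grd3_small; lia.
Qed.

Lemma grd6_add_coin_mid t c : t < a -> c \in sys5 a b -> grd6 (b + t + c) <= t.+2.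
Proof.
move=> t_lt; rewrite !inE => /orP[|/or4P[]] /eqP->.
- have [t1_lt|t1_ge] := ltnP (t + 1) a.
    by rewrite -addnA grd6_low ?grd5_mid; lia.
  by rewrite (_ : b + t + 1 = a + b + 0) ?grd6_low ?grd5_high ?grd3_small; lia.
- by rewrite (_ : b + t + a = a + b + t) ?grd6_low ?grd5_high ?grd3_small; lia.
- have [at_lt|at_ge] := ltnP (a + t) (b - a).
    by rewrite (_ : b + t + 2 * a = a + b + (a + t)) ?grd6_low ?grd5_high
               ?grd3_mid; lia.
  by rewrite (_ : b + t + 2 * a = 2 * b + 0) ?grd6_high ?grd5_low ?grd3_small; lia.
- by rewrite (_ : b + t + b = 2 * b + t) ?grd6_high ?grd5_low ?grd3_small; lia.
- by rewrite (_ : b + t + (a + b) = 2 * b + (a + t)) ?grd6_high ?grd5_low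
             ?grd3_mid; lia.
Qed.

Lemma grd6_add_coin_high y c :
  y < b - a -> c \in sys5 a b -> grd6 (a + b + y + c) <= (grd3 y).+2.
Proof.
move=> y_lt; rewrite !inE => /orP[|/or4P[]] /eqP->.
- have [y1_lt|y1_ge] := ltnP (y + 1) (b - a).
    by have add1 := grd3_add1 a_gt0 y; rewrite -addnA grd6_low ?grd5_high; lia.
  by rewrite (_ : a + b + y + 1 = 2 * b + 0) ?grd6_high ?grd5_low ?grd0; lia.
- have gap_y := @gap y; have /andP[_ adda] := grd3_adda a_gt0 y.
  have [ya_lt|ya_ge] := ltnP (y + a) (b - a).
    by rewrite -addnA grd6_low ?grd5_high; lia.
  by rewrite (_ : a + b + y + a = 2 * b + (y + 2 * a - b)) ?grd6_high ?grd5_low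
             ?[grd3 (y + 2 * a - b)]grd3_small; lia.
- have [y2a_lt|y2a_ge] := ltnP (y + 2 * a) (b - a).
    by have add2a := grd3_add2a a_gt0 y; rewrite -addnA grd6_low ?grd5_high; lia.
  have gap_y := @gap y; have gap_ya := @gap (y + a).
  have /andP[_ adda] := grd3_adda a_gt0 y.
  rewrite (_ : a + b + y + 2 * a = 2 * b + (y + 3 * a - b)) ?grd6_high ?grd5_low
          ?[grd3 (y + 3 * a - b)]grd3_lt3; try lia.
  by repeat case: ifP; lia.
- have /andP[_ adda] := grd3_adda a_gt0 y.
  by rewrite (_ : a + b + y + b = 2 * b + (y + a)) ?grd6_high ?grd5_low; lia.
- have [y2a_lt|y2a_ge] := ltnP (y + 2 * a) b.
    have add2a := grd3_add2a a_gt0 y.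
    by rewrite (_ : a + b + y + (a + b) = 2 * b + (y + 2 * a)) ?grd6_high
               ?grd5_low; lia.
  have gap_y := @gap y.
  by rewrite (_ : a + b + y + (a + b) = 2 * b + (b + (y + 2 * a - b))) ?grd6_high
             ?grd5_mid; lia.
Qed.

Lemma coin_lipschitz_grd6 : coin_lipschitz grd6 (sys6 a b).
Proof.
move=> w c; rewrite sys6E mem_rcons inE => /orP[/eqP->|c_in].
  by rewrite (_ : w + 2 * b = 1 * (2 * b) + w) ?grd6_shift //; lia.
rewrite {1 2}(divn_eq w (2 * b)) -addnA !grd6_shift -addnS leq_add2l.
have s_lt : w %% (2 * b) < 2 * b by rewrite ltn_pmod //; lia.
rewrite [grd6 (w %% _)]grd6_low //.
case: {s_lt}(regionP s_lt) c_in => [s s_lt|t t_lt|y y_lt] c_in.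
- by rewrite grd5_low ?grd6_add_coin_low.
- by rewrite grd5_mid ?grd6_add_coin_mid.
- by rewrite grd5_high ?grd6_add_coin_high.
Qed.

End Gap.

Lemma canonical_sys6 :
  let l := (a + b + 2 * a - 1) %/ (2 * a) in
  grd6 (l * (2 * a)) <= l -> canonical (sys6 a b).
Proof.
move=> l /greedy_gap_of_one_point gap.
exact/canonical_of_coin_lipschitz/coin_lipschitz_grd6.
Qed.

End Sys6.

Theorem lemma13 (c2 c4 : nat) :
  let C := [:: 1; c2; 2 * c2; c4; c2 + c4; 2 * c4] in
  let c3 := 2 * c2 in
  let c5 := c2 + c4 in
  let l := (c5 + c3 - 1) %/ c3 in
  is_system C ->
  3 * c2 - 1 <= c4 ->
  c4 <> 3 * c2 ->
  grd C (l * c3) = l * c3 - c5 + 1 - ((l * c3 - c5) %/ c2) * (c2 - 1) ->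
  grd C (l * c3) <= l ->
  canonical C /\ noncanonical [:: 1; c2; 2 * c2; c4; c2 + c4].
Proof.
move=> C c3 c5 l [_ [_ sorted_C]] c4_ge c4_neq _ grd_l.
have c2_gt1 : 1 < c2 by case/andP: sorted_C.
split; first exact: canonical_sys6 c2_gt1 c4_ge grd_l.
exact: noncanonical_sys5.
Qed.
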